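(* Let $\pi\in RC(n)$. (1) If $n\ge 3$ is odd and $\pi$ is alternating, then $\{\pi_1,\pi_n\}=\{\frac{n-1}{2},\frac{n+1}{2}\}$, $\{\pi_j : 1<j<n,\ j\text{ odd}\}=\{1,\dots,\frac{n-3}{2}\}$, and $\{\pi_j: 1<j<n,\ j\text{ even}\}=\{\frac{n+3}{2},\dots,n\}$. (2) If $n\ge 3$ is odd and $\pi$ is reverse-alternating, then $\{\pi_1,\pi_n\}=\{\frac{n+1}{2},\frac{n+3}{2}\}$, $\{\pi_j: 1<j<n,\ j\text{ odd}\}=\{\frac{n+5}{2},\dots,n\}$, and $\{\pi_j: 1<j<n,\ j\text{ even}\}=\{1,\dots,\frac{n-1}{2}\}$. (3) If $n\ge 2$ is even and $\pi$ is alternating, then $\{\pi_1,\pi_n\}=\{\frac n2,\frac n2+1\}$, $\{\pi_j: 1<j<n,\ j\text{ odd}\}=\{1,\dots,\frac n2-1\}$, and $\{\pi_j: 1<j<n,\ j\text{ even}\}=\{\frac n2+2,\dots,n\}$. (4) If $n\ge 2$ is even and $\pi$ is reverse-alternating, then $\{\pi_1,\pi_n\}=\{\frac n2,\frac n2+1\}$, $\{\pi_j: 1<j<n,\ j\text{ odd}\}=\{\frac n2+2,\dots,n\}$, and $\{\pi_j: 1<j<n,\ j\text{ even}\}=\{1,\dots,\frac n2-1\}$. (Here $\{a,\dots,b\}$ with $a>b$ denotes the empty set.)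
   Context: Permutations of $[n]=\{1,\dots,n\}$ are written in one-line notation $\pi=(\pi_1,\dots,\pi_n)$; $S_n$ is the set of all of them. $\pi$ is alternating if $\pi_1<\pi_2>\pi_3<\cdots$ and reverse-alternating if $\pi_1>\pi_2<\pi_3>\cdots$. For a sequence $\tau=(\tau_1,\dots,\tau_m)$ of distinct numbers with $m\ge 2$, let $i(\tau)$ be the number of maximal increasing runs of consecutive entries of length at least $2$, and $d(\tau)$ the number of maximal decreasing runs of consecutive entries of length at least $2$; set $id(\tau)=i(\tau)+d(\tau)$. Equivalently, $id(\tau)=1+\#\{k: 2\le k\le m-1,\ (\tau_k-\tau_{k-1})(\tau_{k+1}-\tau_k)<0\}$. For $\pi\in S_n$, let $X(\pi)$ be the collection of all subsequences $\tau=(\pi_{j_1},\dots,\pi_{j_m})$ with $j_1<\dots<j_m$ and $m\ge 3$, and $t(\pi)=\sum_{\tau\in X(\pi)} id(\tau)$. Define $RC(n)=\{\pi\in S_n : t(\pi)=\max_{\sigma\in S_n} t(\sigma)\}$. *)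

From mathcomp Require Import all_boot.
Set Implicit Arguments. Unset Strict Implicit. Unset Printing Implicit Defensive.

Definition is_perm (n : nat) (s : seq nat) : bool := perm_eq s (iota 1 n).

Definition turn (a b c : nat) : bool :=
  ((a < b) && (c < b)) || ((b < a) && (b < c)).

(* id(tau) = 1 + #{k : 2 <= k <= m-1 (1-based), tau_k is a peak or valley};
   here with 0-based index k ranging over 1 .. m-2 *)
Definition idf (tau : seq nat) : nat :=
  1 + \sum_(1 <= k < (size tau).-1)
        turn (nth 0 tau k.-1) (nth 0 tau k) (nth 0 tau k.+1).

(* t(pi) = sum of id(tau) over all subsequences tau of pi of length >= 3;
   subsequences are indexed by selection masks (index sets j_1<...<j_m). *)
Definition tval (s : seq nat) : nat :=
  \sum_(m : (size s).-tuple bool | 3 <= size (mask m s)) idf (mask m s).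

Definition inRC (n : nat) (s : seq nat) : Prop :=
  is_perm n s /\ forall sigma, is_perm n sigma -> tval sigma <= tval s.

(* pi_1 < pi_2 > pi_3 < ... (0-based: position k even => ascent) *)
Definition alternating (s : seq nat) : bool :=
  all (fun k => if odd k then nth 0 s k.+1 < nth 0 s k
                else nth 0 s k < nth 0 s k.+1) (iota 0 (size s).-1).

Definition reverse_alternating (s : seq nat) : bool :=
  all (fun k => if odd k then nth 0 s k < nth 0 s k.+1
                else nth 0 s k.+1 < nth 0 s k) (iota 0 (size s).-1).

Definition range (a b : nat) : seq nat := iota a (b.+1 - a).

Definition pij (s : seq nat) (j : nat) : nat := nth 0 s j.-1.

Definition ends (n : nat) (s : seq nat) : seq nat := [:: pij s 1; pij s n].

Definition inner_odd (n : nat) (s : seq nat) : seq nat :=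
  [seq pij s j | j <- iota 2 (n - 2) & odd j].
Definition inner_even (n : nat) (s : seq nat) : seq nat :=
  [seq pij s j | j <- iota 2 (n - 2) & ~~ odd j].

(* Counting, for positions i < j < k, the subsequences of pi in which the entries at
   i, j, k are consecutive gives
     t(pi) = c_n + sum_(i < j < k) [pi_j is a peak or valley of (pi_i, pi_j, pi_k)] 2^i 2^(n-1-k).
   Exchanging two values x and x + 1 of pi, at positions p < q, changes only the terms of
   the triples (i, p, q) and (p, q, k), and among these the triple (p - 1, p, q) outweighs
   all other (i, p, q) together, as (p, q, q + 1) outweighs all other (p, q, k). So if the
   neighbours of p and q lie beyond x and x + 1, the exchange strictly increases t.
   In a maximiser that zigzags this puts every valley value below both end values, and
   both end values below every peak value; as pi is a permutation of [n], valleys, ends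
   and peaks then occupy three consecutive blocks of values, of sizes fixed by n. *)

From Pilot Require Import Defs.
From mathcomp Require Import all_boot zify.
Set Implicit Arguments. Unset Strict Implicit. Unset Printing Implicit Defensive.

(** * Subsequences and turns *)

Fixpoint bitseqs (n : nat) : seq bitseq :=
  if n is n'.+1 then [seq true :: b | b <- bitseqs n'] ++ [seq false :: b | b <- bitseqs n']
  else [:: [::]].

Lemma mem_bitseqs n b : (b \in bitseqs n) = (size b == n).
Proof.
elim: n b => [|n IH] [|c b] //=; rewrite mem_cat.
  by apply/negP => /orP[] /mapP[].
rewrite eqSS -IH.
have cons_in c' : (c :: b \in [seq c' :: b' | b' <- bitseqs n]) = (c == c') && (b \in bitseqs n).
  by apply/mapP/andP => [[b' ? [-> ->]]|[/eqP -> ?]]; [|exists b].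
by rewrite !cons_in; case: (c); rewrite ?orbF.
Qed.

Lemma uniq_bitseqs n : uniq (bitseqs n).
Proof.
elim: n => //= n IH; rewrite cat_uniq !map_inj_uniq ?IH //=; try by move=> ? ? [].
by rewrite andbT; apply/hasPn => _ /mapP[b _ ->]; apply/mapP => -[].
Qed.

Lemma big_tuple_bitseqs (R : Type) (idx : R) (op : Monoid.com_law idx) n
    (F : bitseq -> R) :
  \big[op/idx]_(m : n.-tuple bool) F m = \big[op/idx]_(b <- bitseqs n) F b.
Proof.
rewrite -big_enum -(big_map val xpredT F); apply/perm_big/uniq_perm.
- by rewrite map_inj_uniq ?enum_uniq //; apply: val_inj.
- exact: uniq_bitseqs.
move=> b; rewrite mem_bitseqs; apply/mapP/eqP => [[m _ ->]|sz_b].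
  exact: size_tuple.
by exists (Tuple (introT eqP sz_b)); rewrite ?mem_enum.
Qed.

Lemma big_bitseqsS (R : Type) (idx : R) (op : Monoid.law idx) n (F : bitseq -> R) :
  \big[op/idx]_(b <- bitseqs n.+1) F b =
  op (\big[op/idx]_(b <- bitseqs n) F (true :: b)) (\big[op/idx]_(b <- bitseqs n) F (false :: b)).
Proof. by rewrite big_cat !big_map. Qed.

Lemma sum_bitseqs_const n c : \sum_(b <- bitseqs n) c = c * 2 ^ n.
Proof.
elim: n => [|n IH]; first by rewrite big_seq1 muln1.
by rewrite big_bitseqsS IH /= expnS mulnCA mul2n addnn.
Qed.

Lemma bump0 i : bump 0 i = i.+1. Proof. by []. Qed.

Definition turns (f : nat -> nat -> nat -> nat) (t : seq nat) : nat :=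
  \sum_(1 <= k < (size t).-1) f (nth 0 t k.-1) (nth 0 t k) (nth 0 t k.+1).

Lemma turns_cons f c t :
  turns f (c :: t) = turns f t + (if t is a :: d :: _ then f c a d else 0).
Proof.
case: t => [|a [|d t]]; rewrite /turns /=; try by rewrite !big_geq.
rewrite big_ltn //= addnC big_add1 /=; congr (_ + _).
by apply: eq_big_nat => -[].
Qed.

Lemma sum_mask_head (g : nat -> nat) s :
  \sum_(b <- bitseqs (size s)) (if mask b s is a :: _ then g a else 0) =
  \sum_(k < size s) g (nth 0 s k) * 2 ^ ((size s).-1 - k).
Proof.
elim: s => [|c s IH]; first by rewrite big_seq1 big_ord0.
rewrite /= big_bitseqsS /= IH sum_bitseqs_const big_ord_recl subn0; congr (_ + _).
by apply: eq_bigr => k _; rewrite subnS predn_sub.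
Qed.

Lemma sum_mask_head2 (g : nat -> nat -> nat) s :
  \sum_(b <- bitseqs (size s)) (if mask b s is a :: d :: _ then g a d else 0) =
  \sum_(j < size s) \sum_(k < size s)
    (j < k) * (g (nth 0 s j) (nth 0 s k) * 2 ^ ((size s).-1 - k)).
Proof.
elim: s => [|c s IH]; first by rewrite big_seq1 big_ord0.
rewrite /= big_bitseqsS /= IH.
have -> : \sum_(b <- bitseqs (size s)) (if mask b s is a :: _ then g c a else 0) =
    \sum_(k < size s) g c (nth 0 s k) * 2 ^ ((size s).-1 - k).
  by rewrite -(sum_mask_head (g c)); apply: eq_bigr => b _; case: (mask b s).
rewrite !big_ord_recl /= mul0n add0n; congr (_ + _).
  by apply: eq_bigr => k _; rewrite subnS predn_sub mul1n.
apply: eq_bigr => j _; rewrite big_ord_recl /= mul0n add0n.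
by apply: eq_bigr => k _; rewrite ltnS subnS predn_sub.
Qed.

(* [2 ^ i * 2 ^ (size s - 1 - k)] counts the subsequences of [s] in which the entries at
   positions i < j < k are consecutive: any entries before i and after k may be kept. *)
Definition triple_weight (f : nat -> nat -> nat -> nat) (s : seq nat) : nat :=
  \sum_(i < size s) \sum_(j < size s) \sum_(k < size s)
    ((i < j) && (j < k)) *
      (f (nth 0 s i) (nth 0 s j) (nth 0 s k) * (2 ^ i * 2 ^ ((size s).-1 - k))).

Lemma triple_weight_cons f c s :
  triple_weight f (c :: s) = (triple_weight f s).*2 +
    \sum_(j < size s) \sum_(k < size s)
      (j < k) * (f c (nth 0 s j) (nth 0 s k) * 2 ^ ((size s).-1 - k)).
Proof.
rewrite /triple_weight /= big_ord_recl addnC; congr (_ + _).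
- rewrite -addnn -big_split; apply: eq_bigr => i _ /=.
  rewrite big_ord_recl big1 // add0n -big_split; apply: eq_bigr => j _ /=.
  rewrite big_ord_recl andbF mul0n add0n -big_split.
  apply: eq_bigr => k _ /=; rewrite !bump0 !add0n expnS addnn -mul2n.
  by case: (_ && _); rewrite ?mul0n ?muln0 // !mul1n subnS predn_sub !mulnA [_ * 2]mulnC.
- rewrite big_ord_recl big1 ?add0n //; apply: eq_bigr => j _.
  rewrite big_ord_recl /= mul0n add0n; apply: eq_bigr => k _.
  by rewrite ltnS mul1n subnS predn_sub.
Qed.

Lemma sum_mask_turns f s :
  \sum_(b <- bitseqs (size s)) turns f (mask b s) = triple_weight f s.
Proof.
elim: s => [|c s IH]; first by rewrite big_seq1 /turns /triple_weight big_geq ?big_ord0.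
rewrite /= big_bitseqsS /= triple_weight_cons -addnn -IH -sum_mask_head2 -!big_split /=.
by apply: eq_bigr => b _; rewrite turns_cons; lia.
Qed.

Lemma tval_triple_weight (s : seq nat) :
  Defs.tval s = \sum_(b <- bitseqs (size s)) (3 <= count id b) +
           triple_weight (fun a b c => turn a b c) s.
Proof.
rewrite /Defs.tval big_mkcond (big_tuple_bitseqs _ _
  (fun b => if 3 <= size (mask b s) then idf (mask b s) else 0)).
rewrite -sum_mask_turns -big_split big_seq [RHS]big_seq; apply: eq_bigr => b.
rewrite mem_bitseqs => /eqP sz_b; rewrite size_mask // /idf.
by case: ifP => // lt_b; rewrite /turns big_geq // size_mask //; lia.
Qed.

(** * Exchanging the values x and x + 1 *)

Definition swap_succ (x v : nat) : nat :=
  if v == x then x.+1 else if v == x.+1 then x else v.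

Definition succ_pair (x u v : nat) : bool :=
  ((u == x) && (v == x.+1)) || ((u == x.+1) && (v == x)).

Lemma swap_succK x : involutive (swap_succ x).
Proof. by move=> v; rewrite /swap_succ; do ![case: eqP => //]; lia. Qed.

Lemma swap_succ_lt x u v :
  ~~ succ_pair x u v -> (swap_succ x u < swap_succ x v) = (u < v).
Proof. by rewrite /swap_succ /succ_pair; do ![case: eqP]; lia. Qed.

Lemma turn_swap_succ x a b c : ~~ succ_pair x a b -> ~~ succ_pair x c b ->
  turn (swap_succ x a) (swap_succ x b) (swap_succ x c) = turn a b c.
Proof.
move=> ab cb; have ba : ~~ succ_pair x b a by move: ab; rewrite /succ_pair; lia.
have bc : ~~ succ_pair x b c by move: cb; rewrite /succ_pair; lia.
by rewrite /turn !swap_succ_lt.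
Qed.

Lemma triple_weight_map f h s :
  triple_weight f (map h s) = triple_weight (fun a b c => f (h a) (h b) (h c)) s.
Proof.
rewrite /triple_weight size_map; do 3![apply: eq_bigr => ? _].
by rewrite !(nth_map 0).
Qed.

Lemma sum_ord_pick n m (F : nat -> nat) : m < n -> \sum_(j < n) (j == m :> nat) * F j = F m.
Proof.
move=> lt_mn; rewrite (bigD1 (Ordinal lt_mn)) //= eqxx mul1n big1 ?addn0 // => j.
by rewrite -val_eqE => /negbTE ->.
Qed.

Section PairOfPositions.

Variables (f : nat -> nat -> nat -> nat) (s : seq nat) (p q : nat).

Local Notation w i k := (2 ^ i * 2 ^ ((size s).-1 - k)).

Definition triples_off : nat :=
  \sum_(i < size s) \sum_(j < size s) \sum_(k < size s)
    [&& i < j, j < k &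
        ~~ (((j == p :> nat) && (k == q :> nat)) || ((i == p :> nat) && (j == q :> nat)))] *
      (f (nth 0 s i) (nth 0 s j) (nth 0 s k) * w i k).

Definition triples_into : nat :=
  \sum_(i < size s | i < p) f (nth 0 s i) (nth 0 s p) (nth 0 s q) * w i q.

Definition triples_from : nat :=
  \sum_(k < size s | q < k) f (nth 0 s p) (nth 0 s q) (nth 0 s k) * w p k.

Lemma triple_weight_split : p < q < size s ->
  triple_weight f s = triples_off + triples_into + triples_from.
Proof.
case/andP=> lt_pq lt_qs; have lt_ps : p < size s by lia.
set T := fun i j k : nat => f (nth 0 s i) (nth 0 s j) (nth 0 s k) * w i k.
have pick2 (G : nat -> nat -> nat) :
    \sum_(j < size s) \sum_(k < size s) (j == p :> nat) * ((k == q :> nat) * G j k) = G p q.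
  transitivity (\sum_(j < size s) (j == p :> nat) * \sum_(k < size s) (k == q :> nat) * G j k).
    by apply: eq_bigr => j _; rewrite big_distrr.
  by rewrite (sum_ord_pick (fun j => \sum_(k < size s) _ * G j k)) // sum_ord_pick.
have into3 : triples_into = \sum_(i < size s) \sum_(j < size s) \sum_(k < size s)
    (j == p :> nat) * ((k == q :> nat) * ((i < p) * T i j k)).
  rewrite /triples_into big_mkcond; apply: eq_bigr => i _.
  by rewrite (pick2 (fun j k => (i < p) * T i j k)) /T; case: (i < p); rewrite ?mul1n.
have from3 : triples_from = \sum_(i < size s) \sum_(j < size s) \sum_(k < size s)
    (i == p :> nat) * ((j == q :> nat) * ((q < k) * T i j k)).
  transitivity (\sum_(k < size s) (q < k) * T p q k).
    by rewrite /triples_from big_mkcond; apply: eq_bigr => k _; case: (q < k); rewrite ?mul1n.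
  rewrite -(pick2 (fun i j => \sum_(k < size s) (q < k) * T i j k)).
  by do 2![apply: eq_bigr => ? _]; rewrite !big_distrr.
rewrite into3 from3 /triple_weight /triples_off.
do 3![rewrite -!big_split; apply: eq_bigr => ? _] => /=.
rewrite /T !mulnA -!mulnDl; congr (_ * _); lia.
Qed.
End PairOfPositions.

Lemma sum_dominated_lt (I : finType) (P : pred I) (m : I) (a b w : I -> nat) :
  P m -> (forall i, a i <= 1) -> a m = 0 -> b m = 1 ->
  \sum_(i | P i && (i != m)) w i < w m ->
  \sum_(i | P i) a i * w i < \sum_(i | P i) b i * w i.
Proof.
move=> Pm a_le1 am bm lt_w; rewrite !(bigD1 m Pm) /= am bm mul0n mul1n add0n.
apply: leq_ltn_trans (leq_trans lt_w (leq_addr _ _)).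
by apply: leq_sum => i _; rewrite -[X in _ <= X]mul1n leq_mul2r a_le1 orbT.
Qed.

Lemma sum_pow2_lt n m : m <= n -> \sum_(i < n | i < m) 2 ^ i < 2 ^ m.
Proof.
move=> le_mn; rewrite -(big_ord_widen n (fun i => 2 ^ i) le_mn).
by rewrite -[X in _ < X]prednK ?expn_gt0 // ltnS predn_exp mul1n.
Qed.

Definition creates_turn (x a b c : nat) : bool :=
  ~~ turn a b c && turn (swap_succ x a) (swap_succ x b) (swap_succ x c).

Lemma triples_into_swap_succ_lt x s p q : 0 < p < q -> q < size s ->
  creates_turn x (nth 0 s p.-1) (nth 0 s p) (nth 0 s q) ->
  triples_into (fun a b c => turn a b c) s p q <
  triples_into (fun a b c => turn (swap_succ x a) (swap_succ x b) (swap_succ x c)) s p q.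
Proof.
move=> /andP[p_gt0 lt_pq] lt_qs /andP[/negbTE no_turn new_turn].
have lt_p1s : p.-1 < size s by lia.
apply: (sum_dominated_lt (m := Ordinal lt_p1s)
  (a := fun i : 'I_(size s) => turn (nth 0 s i) (nth 0 s p) (nth 0 s q))
  (w := fun i : 'I_(size s) => 2 ^ i * 2 ^ ((size s).-1 - q))) => //=.
- by rewrite prednK.
- by move=> i; case: turn.
- by rewrite no_turn.
- by rewrite new_turn.
rewrite (eq_bigl (fun i : 'I_(size s) => i < p.-1)) => [|i]; last by rewrite -val_eqE /=; lia.
by rewrite -big_distrl ltn_mul2r expn_gt0 /= sum_pow2_lt //; lia.
Qed.

Lemma triples_from_swap_succ_lt x s p q : p < q -> q.+1 < size s ->
  creates_turn x (nth 0 s p) (nth 0 s q) (nth 0 s q.+1) ->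
  triples_from (fun a b c => turn a b c) s p q <
  triples_from (fun a b c => turn (swap_succ x a) (swap_succ x b) (swap_succ x c)) s p q.
Proof.
move=> lt_pq lt_q1s /andP[/negbTE no_turn new_turn].
apply: (sum_dominated_lt (m := Ordinal lt_q1s)
  (a := fun k : 'I_(size s) => turn (nth 0 s p) (nth 0 s q) (nth 0 s k))
  (w := fun k : 'I_(size s) => 2 ^ p * 2 ^ ((size s).-1 - k))) => //=.
- by move=> i; case: turn.
- by rewrite no_turn.
- by rewrite new_turn.
rewrite -big_distrr ltn_mul2l expn_gt0 /= (reindex_inj rev_ord_inj) /=.
rewrite (eq_big (fun i : 'I_(size s) => i < (size s).-1 - q.+1) (fun i => 2 ^ i)).
- by rewrite sum_pow2_lt //; lia.
- by move=> i; rewrite -val_eqE /=; lia.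
- by move=> i _; congr (2 ^ _); have := ltn_ord i; lia.
Qed.

Lemma triples_into0 f s q : triples_into f s 0 q = 0.
Proof. by rewrite /triples_into big_pred0. Qed.

Lemma triples_from_last f s p q : q.+1 = size s -> triples_from f s p q = 0.
Proof. by move=> qs; rewrite /triples_from big_pred0 // => k; have := ltn_ord k; lia. Qed.

Lemma succ_pair_nth_uniq x (s : seq nat) i j p q : uniq s ->
  i < size s -> j < size s -> p < size s -> q < size s ->
  succ_pair x (nth 0 s p) (nth 0 s q) -> succ_pair x (nth 0 s i) (nth 0 s j) ->
  ((i == p) && (j == q)) || ((i == q) && (j == p)).
Proof.
move=> s_uniq ltis ltjs ltps ltqs pq_pair ij_pair.
have : [|| (nth 0 s i == nth 0 s p) && (nth 0 s j == nth 0 s q)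
         | (nth 0 s i == nth 0 s q) && (nth 0 s j == nth 0 s p)].
  by move: pq_pair ij_pair; rewrite /succ_pair; lia.
by rewrite !nth_uniq.
Qed.

Lemma triples_off_swap_succ x (s : seq nat) p q : uniq s -> p < q < size s ->
  succ_pair x (nth 0 s p) (nth 0 s q) ->
  triples_off (fun a b c => turn (swap_succ x a) (swap_succ x b) (swap_succ x c)) s p q =
  triples_off (fun a b c => turn a b c) s p q.
Proof.
move=> s_uniq /andP[lt_pq lt_qs] pq_pair; have lt_ps : p < size s by lia.
apply: eq_bigr => i _; apply: eq_bigr => j _; apply: eq_bigr => k _.
case: (boolP (_ && _)) => [off|]; last by rewrite !mul0n.
rewrite turn_swap_succ //; apply/negP.
- by move/(succ_pair_nth_uniq s_uniq (ltn_ord i) (ltn_ord j) lt_ps lt_qs pq_pair); lia.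
- by move/(succ_pair_nth_uniq s_uniq (ltn_ord k) (ltn_ord j) lt_ps lt_qs pq_pair); lia.
Qed.

Lemma tval_swap_succ_lt x (s : seq nat) p q : uniq s -> p < q < size s ->
  succ_pair x (nth 0 s p) (nth 0 s q) ->
  p = 0 \/ creates_turn x (nth 0 s p.-1) (nth 0 s p) (nth 0 s q) ->
  q.+1 = size s \/ creates_turn x (nth 0 s p) (nth 0 s q) (nth 0 s q.+1) ->
  0 < p \/ q.+1 < size s ->
  Defs.tval s < Defs.tval (map (swap_succ x) s).
Proof.
move=> s_uniq pqs pq_pair at_p at_q inner; have /andP[lt_pq lt_qs] := pqs.
rewrite !tval_triple_weight size_map triple_weight_map ltn_add2l.
rewrite !(triple_weight_split _ pqs) triples_off_swap_succ // -!addnA ltn_add2l.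
have [p0|p_gt0] := posnP p; have [q_last|q_inner] := eqVneq q.+1 (size s).
- by case: inner; rewrite ?p0 ?q_last ltnn.
- subst p; rewrite !triples_into0; apply: triples_from_swap_succ_lt => //; first lia.
  by case: at_q q_inner => [->|]; rewrite ?eqxx.
- rewrite !triples_from_last // !addn0; apply: triples_into_swap_succ_lt; rewrite ?p_gt0 //.
  by case: at_p p_gt0 => [->|].
- rewrite -addSn; apply: leq_add.
    by apply: triples_into_swap_succ_lt; rewrite ?p_gt0 //; case: at_p p_gt0 => [->|].
  apply/ltnW/triples_from_swap_succ_lt => //; first lia.
  by case: at_q q_inner => [->|]; rewrite ?eqxx.
Qed.

Definition beyond (x u v : nat) : bool :=
  ((u < x) && (v == x)) || ((x.+1 < u) && (v == x.+1)).

Lemma creates_turn_beyond_l x u v w :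
  succ_pair x v w -> beyond x u v -> creates_turn x u v w.
Proof. by rewrite /creates_turn /turn /swap_succ /succ_pair /beyond; do ![case: eqP]; lia. Qed.

Lemma creates_turn_beyond_r x u v w :
  succ_pair x v w -> beyond x u w -> creates_turn x v w u.
Proof. by rewrite /creates_turn /turn /swap_succ /succ_pair /beyond; do ![case: eqP]; lia. Qed.

Lemma is_perm_props n (s : seq nat) :
  is_perm n s -> [/\ size s = n, uniq s & forall v, (v \in s) = (0 < v <= n)].
Proof.
move=> s_perm; split.
- by rewrite (perm_size s_perm) size_iota.
- by rewrite (perm_uniq s_perm) iota_uniq.
- by move=> v; rewrite (perm_mem s_perm) mem_iota; lia.
Qed.

Lemma is_perm_nth n (s : seq nat) i : is_perm n s -> i < n -> 0 < nth 0 s i <= n.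
Proof. by move=> /is_perm_props[sz_s _ mem_s] lt_in; rewrite -mem_s mem_nth ?sz_s. Qed.

Lemma is_perm_index n (s : seq nat) v :
  is_perm n s -> 0 < v <= n -> index v s < n /\ nth 0 s (index v s) = v.
Proof.
move=> /is_perm_props[sz_s _ mem_s]; rewrite -mem_s -sz_s index_mem => v_in.
by rewrite nth_index.
Qed.

Lemma perm_swap_succ n (s : seq nat) x :
  is_perm n s -> 0 < x < n -> is_perm n (map (swap_succ x) s).
Proof.
move=> s_perm x_range; have [_ s_uniq mem_s] := is_perm_props s_perm.
have swap_inj := can_inj (swap_succK x).
apply: uniq_perm; rewrite ?map_inj_uniq ?iota_uniq // => v.
rewrite -{1}(swap_succK x v) (mem_map swap_inj) mem_s mem_iota /swap_succ.
by do ![case: eqP]; lia.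
Qed.

Lemma inRC_swap_succ_contra n (s : seq nat) x p q : inRC n s -> p < q < n ->
  succ_pair x (nth 0 s p) (nth 0 s q) ->
  p = 0 \/ beyond x (nth 0 s p.-1) (nth 0 s p) ->
  q.+1 = n \/ beyond x (nth 0 s q.+1) (nth 0 s q) ->
  0 < p \/ q.+1 < n -> False.
Proof.
move=> [s_perm s_max] pqn pq_pair at_p at_q inner.
have [sz_s s_uniq mem_s] := is_perm_props s_perm.
have x_range : 0 < x < n.
  have : (nth 0 s p \in s) && (nth 0 s q \in s) by rewrite !mem_nth ?sz_s //; case/andP: pqn; lia.
  by rewrite !mem_s; move: pq_pair; rewrite /succ_pair; lia.
have := s_max _ (perm_swap_succ s_perm x_range); rewrite leqNgt => /negP; apply.
rewrite -sz_s in pqn at_q inner; apply: (@tval_swap_succ_lt x s p q) => //.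
- by case: at_p => [?|/(creates_turn_beyond_l pq_pair) ?]; [left | right].
- by case: at_q => [?|/(creates_turn_beyond_r pq_pair) ?]; [left | right].
Qed.

(** * Permutations with a monotone classification of positions *)

Lemma sub_in_count (T : eqType) (a1 a2 : pred T) (r : seq T) :
  {in r, subpred a1 a2} -> count a1 r <= count a2 r.
Proof.
move=> sub; rewrite (@eq_in_count _ a1 (predI a1 a2)) => [|x x_in /=].
  by apply: sub_count => x /andP[].
by case: (boolP (a1 x)) => //= /(sub x x_in).
Qed.

Lemma count_iota_lt a m v :
  count (fun y => y < v) (iota a m) = minn (a + m) v - minn a v.
Proof. by elim: m a => [|m IH] a /=; rewrite ?addn0 ?subnn // IH; lia. Qed.

Lemma count_perm_nth_lt n (s : seq nat) v : is_perm n s -> v <= n.+1 ->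
  count (fun k => nth 0 s k < v) (iota 0 n) = v.-1.
Proof.
move=> s_perm le_v; have [sz_s _ _] := is_perm_props s_perm.
rewrite -[X in iota 0 X]sz_s -(count_map _ (fun y => y < v)).
have -> : map (nth 0 s) (iota 0 (size s)) = s := mkseq_nth 0 s.
by rewrite (permP s_perm) count_iota_lt; lia.
Qed.

Section MonotoneClasses.

Variables (n : nat) (s : seq nat) (cl : nat -> nat).
Hypothesis s_perm : is_perm n s.
Hypothesis cl_mono : forall i k, i < n -> k < n -> nth 0 s i < nth 0 s k -> cl i <= cl k.

Local Notation below c := (count (fun k => cl k < c) (iota 0 n)).

Lemma nth_perm_inj i k : i < n -> k < n -> nth 0 s i = nth 0 s k -> i = k.
Proof.
have [sz_s s_uniq _] := is_perm_props s_perm.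
by move=> lt_in lt_kn /eqP; rewrite nth_uniq ?sz_s // => /eqP.
Qed.

Lemma below_class_lt_nth i : i < n -> below (cl i) < nth 0 s i.
Proof.
move=> lt_in; have range_i := is_perm_nth s_perm lt_in.
apply: leq_ltn_trans (_ : _ <= count (fun k => nth 0 s k < nth 0 s i) (iota 0 n)) _.
  apply: sub_in_count => k; rewrite mem_iota => /= lt_kn lt_cl.
  case: (ltngtP (nth 0 s k) (nth 0 s i)) => // [lt_ik|eq_ki].
    by have := cl_mono lt_in lt_kn lt_ik; lia.
  by move: lt_cl; rewrite (nth_perm_inj lt_kn lt_in eq_ki) ltnn.
rewrite count_perm_nth_lt //; lia.
Qed.

Lemma nth_le_below_class_succ i : i < n -> nth 0 s i <= below (cl i).+1.
Proof.
move=> lt_in; have range_i := is_perm_nth s_perm lt_in.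
apply: leq_trans (_ : _ <= count (fun k => nth 0 s k < (nth 0 s i).+1) (iota 0 n)) _.
  by rewrite count_perm_nth_lt //; lia.
apply: sub_in_count => k; rewrite mem_iota => /= lt_kn; rewrite !ltnS leq_eqVlt.
case/orP=> [/eqP eq_ki|lt_ki]; first by rewrite (nth_perm_inj lt_kn lt_in eq_ki).
exact: cl_mono.
Qed.

Lemma mem_class_values c y :
  (y \in [seq nth 0 s i | i <- iota 0 n & cl i == c]) = (below c < y <= below c.+1).
Proof.
have below_mono c1 c2 : c1 <= c2 -> below c1 <= below c2.
  by move=> le_c; apply: sub_count => k /=; lia.
apply/mapP/idP => [[i] | y_range].
  rewrite mem_filter mem_iota => /andP[/eqP <- /= lt_in] ->.
  by rewrite below_class_lt_nth // nth_le_below_class_succ.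
have below_n : below c.+1 <= n by rewrite -[X in _ <= X](size_iota 0 n) count_size.
have [] := @is_perm_index n s y s_perm ltac:(lia).
move: (index y s) => m lt_mn sm; exists m; rewrite // mem_filter mem_iota /= lt_mn andbT.
have := below_class_lt_nth lt_mn; have := nth_le_below_class_succ lt_mn; rewrite sm.
case: (ltngtP (cl m) c) => [lt_c|gt_c|->] // *.
- by have := below_mono _ _ lt_c; lia.
- by have := below_mono _ _ gt_c; lia.
Qed.

End MonotoneClasses.

(** * Maximisers that zigzag *)

Definition zigzag (b : bool) (s : seq nat) : Prop :=
  forall k, k.+1 < size s ->
    if odd k == b then nth 0 s k < nth 0 s k.+1 else nth 0 s k.+1 < nth 0 s k.

Lemma alternating_zigzag s : alternating s -> zigzag false s.
Proof. by move=> /allP alt k lt_k; have := alt k; rewrite mem_iota; case: odd => ->//; lia. Qed.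

Lemma reverse_alternating_zigzag s : reverse_alternating s -> zigzag true s.
Proof. by move=> /allP alt k lt_k; have := alt k; rewrite mem_iota; case: odd => ->//; lia. Qed.

Lemma zigzag_turn b s i : zigzag b s -> 0 < i < (size s).-1 ->
  if odd i == b then (nth 0 s i < nth 0 s i.-1) && (nth 0 s i < nth 0 s i.+1)
  else (nth 0 s i.-1 < nth 0 s i) && (nth 0 s i.+1 < nth 0 s i).
Proof.
case: i => // j zz /= lt_j.
by move: (zz j) (zz j.+1) => /=; case: (odd j); case: (b) => /=; lia.
Qed.

(* Valleys get class 0, the two ends class 1 and peaks class 2. *)
Definition zigzag_class (b : bool) (n i : nat) : nat :=
  if (i == 0) || (i == n.-1) then 1 else if odd i == b then 0 else 2.

Lemma zigzag_class_le2 b n i : zigzag_class b n i <= 2.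
Proof. by rewrite /zigzag_class; case: ifP => //; case: ifP. Qed.

Lemma mem_range a b y : (y \in range a b) = (a <= y <= b).
Proof. by rewrite /range mem_iota; lia. Qed.

Lemma iota_first_last n : 2 <= n -> iota 0 n = [:: 0] ++ iota 1 (n - 2) ++ [:: n.-1].
Proof.
move=> n_ge2; have {1}-> : n = 1 + (n - 2) + 1 by lia.
by rewrite !iotaD -catA /= (_ : 0 + (1 + (n - 2)) = n.-1) //; lia.
Qed.

Section ZigzagMaximiser.

Variables (n : nat) (s : seq nat) (b : bool).
Hypotheses (s_RC : inRC n s) (n_ge2 : 2 <= n) (s_zz : zigzag b s).

Local Notation cls := (zigzag_class b n).

Lemma zigzag_class_succ a c :
  a < n -> c < n -> nth 0 s c = (nth 0 s a).+1 -> cls a <= cls c.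
Proof.
move=> lt_an lt_cn sc; rewrite leqNgt; apply/negP => lt_cls.
have [sz_s _ _] := is_perm_props s_RC.1.
have not_both_ends : ~~ (((a == 0) || (a == n.-1)) && ((c == 0) || (c == n.-1))).
  by apply/negP => /andP[a_end c_end]; move: lt_cls; rewrite /zigzag_class a_end c_end.
have at_a : ((a == 0) || (a == n.-1)) ||
              [&& 0 < a < n.-1, nth 0 s a.-1 < nth 0 s a & nth 0 s a.+1 < nth 0 s a].
  case: (boolP ((a == 0) || (a == n.-1))) => //= a_inner; have a_in : 0 < a < n.-1 by lia.
  move: lt_cls (zigzag_turn s_zz (i := a)); rewrite sz_s /zigzag_class (negbTE a_inner) a_in.
  by case: (odd a == b) => // _ /(_ isT) ->.
have at_c : ((c == 0) || (c == n.-1)) ||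
              [&& 0 < c < n.-1, nth 0 s c < nth 0 s c.-1 & nth 0 s c < nth 0 s c.+1].
  case: (boolP ((c == 0) || (c == n.-1))) => //= c_inner; have c_in : 0 < c < n.-1 by lia.
  move: lt_cls (zigzag_class_le2 b n a) (zigzag_turn s_zz (i := c)).
  rewrite sz_s [cls c]/zigzag_class (negbTE c_inner) c_in.
  by case: (odd c == b) => [_ _ /(_ isT) ->|]; [|lia].
(* The smaller value sits at a peak or an end and the larger one at a valley or an end,
   so their neighbours lie beyond them and exchanging the two values increases t. *)
have [lt_ac|lt_ca|eq_ac] := ltngtP a c; last by rewrite eq_ac in sc; lia.
- apply: (@inRC_swap_succ_contra n s (nth 0 s a) a c) => //; rewrite /succ_pair /beyond; lia.
- apply: (@inRC_swap_succ_contra n s (nth 0 s a) c a) => //; rewrite /succ_pair /beyond; lia.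
Qed.

Lemma zigzag_class_mono i k :
  i < n -> k < n -> nth 0 s i < nth 0 s k -> cls i <= cls k.
Proof.
move=> lt_in lt_kn lt_ik; have s_perm := s_RC.1.
have [d sk] : exists d, nth 0 s k = nth 0 s i + d.+1 by exists (nth 0 s k - nth 0 s i).-1; lia.
elim: d i lt_in {lt_ik} sk => [|d IH] i lt_in sk.
  by apply: zigzag_class_succ => //; rewrite sk addn1.
have [lt_jn sj] := @is_perm_index n s (nth 0 s i).+1 s_perm
  ltac:(have := is_perm_nth s_perm lt_kn; lia).
apply: leq_trans (zigzag_class_succ lt_in lt_jn sj) (IH _ lt_jn _); lia.
Qed.

Local Notation inner := (iota 1 (n - 2)).
Local Notation inner_cls i := (if odd i == b then 0 else 2).

Lemma zigzag_class_ends : cls 0 = 1 /\ cls n.-1 = 1.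
Proof. by rewrite /zigzag_class !eqxx orbT. Qed.

Lemma zigzag_class_inner : {in inner, forall i, cls i = inner_cls i}.
Proof. by move=> i; rewrite mem_iota /zigzag_class => i_in; rewrite ifF //; lia. Qed.

Lemma filter_zigzag_class c : [seq i <- iota 0 n | cls i == c] =
  [seq i <- [:: 0] | 1 == c] ++ [seq i <- inner | inner_cls i == c] ++
  [seq i <- [:: n.-1] | 1 == c].
Proof.
have [cls0 clsn] := zigzag_class_ends.
rewrite iota_first_last // !filter_cat /= cls0 clsn; congr (_ ++ _ ++ _).
by apply: eq_in_filter => i /zigzag_class_inner ->.
Qed.

Lemma count_zigzag_class_lt c : count (fun k => cls k < c) (iota 0 n) =
  (1 < c).*2 + count (fun i => inner_cls i < c) inner.
Proof.
have [cls0 clsn] := zigzag_class_ends.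
rewrite iota_first_last // !count_cat /= cls0 clsn (eq_in_count (a2 := fun i => inner_cls i < c)).
  by case: (1 < c) => /=; lia.
by move=> i /zigzag_class_inner ->.
Qed.

Lemma inRC_zigzag_blocks :
  let V := count (fun i => odd i == b) inner in
  [/\ ends n s =i [:: V.+1; V.+2],
      [seq nth 0 s i | i <- inner & odd i == b] =i range 1 V
    & [seq nth 0 s i | i <- inner & odd i != b] =i range V.+3 n].
Proof.
move=> V; have blocks := mem_class_values s_RC.1 zigzag_class_mono.
have cnt0 : count (fun i => inner_cls i < 0) inner = 0.
  by rewrite -[RHS](count_pred0 inner); apply: eq_count => i; case: ifP.
have cnt1 : count (fun i => inner_cls i < 1) inner = V.
  by rewrite /V; apply: eq_count => i; case: ifP.
have cnt2 : count (fun i => inner_cls i < 2) inner = V.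
  by rewrite /V; apply: eq_count => i; case: ifP.
have cnt3 : count (fun i => inner_cls i < 3) inner = n - 2.
  by rewrite -[RHS](size_iota 1) -count_predT; apply: eq_count => i; case: ifP.
have inner_blocks c : [seq i <- inner | inner_cls i == c] =
    if c == 0 then [seq i <- inner | odd i == b]
    else if c == 2 then [seq i <- inner | odd i != b] else [::].
  case: c => [|[|[|c]]] /=; rewrite -?[RHS](filter_pred0 inner);
    by apply: eq_filter => i; case: (odd i == b).
split=> y; rewrite ?mem_range.
- move: (blocks 1 y); rewrite filter_zigzag_class !count_zigzag_class_lt inner_blocks cnt1 cnt2 /=.
  by rewrite /ends /pij /= => ->; rewrite !inE; lia.
- move: (blocks 0 y); rewrite filter_zigzag_class !count_zigzag_class_lt inner_blocks cnt0 cnt1 /=.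
  by rewrite cats0 => ->; lia.
- move: (blocks 2 y); rewrite filter_zigzag_class !count_zigzag_class_lt inner_blocks cnt2 cnt3 /=.
  by rewrite cats0 => ->; lia.
Qed.

End ZigzagMaximiser.

Lemma count_parity_iota1 b m :
  count (fun i => odd i == b) (iota 1 m) = if b then uphalf m else m./2.
Proof.
elim: m => [|m IH]; first by case: b.
rewrite -[m.+1]addn1 iotaD count_cat IH /= addn0.
by case: (b) IH => /= _; lia.
Qed.

Lemma inner_odd_iota n (s : seq nat) :
  inner_odd n s = [seq nth 0 s i | i <- iota 1 (n - 2) & ~~ odd i].
Proof.
rewrite /inner_odd -[2]/(1 + 1) iotaDl filter_map -map_comp.
by rewrite (eq_filter (a2 := fun i => ~~ odd i)) //; apply: eq_map.
Qed.

Lemma inner_even_iota n (s : seq nat) :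
  inner_even n s = [seq nth 0 s i | i <- iota 1 (n - 2) & odd i].
Proof.
rewrite /inner_even -[2]/(1 + 1) iotaDl filter_map -map_comp.
by rewrite (eq_filter (a2 := odd)) => [|i /=]; [apply: eq_map | rewrite negbK].
Qed.

Lemma inRC_alternating_blocks n (s : seq nat) : inRC n s -> 2 <= n -> alternating s ->
  [/\ ends n s =i [:: ((n - 2)./2).+1; ((n - 2)./2).+2],
      inner_odd n s =i range 1 (n - 2)./2
    & inner_even n s =i range ((n - 2)./2).+3 n].
Proof.
move=> s_RC n_ge2 /alternating_zigzag s_zz.
have [] := inRC_zigzag_blocks s_RC n_ge2 s_zz; rewrite count_parity_iota1.
rewrite (eq_filter (a1 := fun i => odd i == false) (a2 := fun i => ~~ odd i)) => [|i];
  last by case: odd.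
rewrite (eq_filter (a1 := fun i => odd i != false) (a2 := odd)) => [|i]; last by case: odd.
by rewrite inner_odd_iota inner_even_iota.
Qed.

Lemma inRC_reverse_alternating_blocks n (s : seq nat) :
  inRC n s -> 2 <= n -> reverse_alternating s ->
  [/\ ends n s =i [:: (uphalf (n - 2)).+1; (uphalf (n - 2)).+2],
      inner_even n s =i range 1 (uphalf (n - 2))
    & inner_odd n s =i range (uphalf (n - 2)).+3 n].
Proof.
move=> s_RC n_ge2 /reverse_alternating_zigzag s_zz.
have [] := inRC_zigzag_blocks s_RC n_ge2 s_zz; rewrite count_parity_iota1.
rewrite (eq_filter (a1 := fun i => odd i == true) (a2 := odd)) => [|i]; last by case: odd.
rewrite (eq_filter (a1 := fun i => odd i != true) (a2 := fun i => ~~ odd i)) => [|i];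
  last by case: odd.
by rewrite inner_odd_iota inner_even_iota.
Qed.

Theorem mainTheorem4 (n : nat) (s : seq nat) :
  inRC n s ->
  [/\ (3 <= n -> odd n -> alternating s ->
        [/\ ends n s =i [:: (n - 1)./2; (n + 1)./2],
            inner_odd n s =i range 1 ((n - 3)./2)
          & inner_even n s =i range ((n + 3)./2) n]),
      (3 <= n -> odd n -> reverse_alternating s ->
        [/\ ends n s =i [:: (n + 1)./2; (n + 3)./2],
            inner_odd n s =i range ((n + 5)./2) n
          & inner_even n s =i range 1 ((n - 1)./2)]),
      (2 <= n -> ~~ odd n -> alternating s ->
        [/\ ends n s =i [:: n./2; n./2 + 1],
            inner_odd n s =i range 1 (n./2 - 1)
          & inner_even n s =i range (n./2 + 2) n])
    & (2 <= n -> ~~ odd n -> reverse_alternating s ->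
        [/\ ends n s =i [:: n./2; n./2 + 1],
            inner_odd n s =i range (n./2 + 2) n
          & inner_even n s =i range 1 (n./2 - 1)])].
Proof.
move=> s_RC; split=> n_ge n_par zz.
- have [E O I] := inRC_alternating_blocks s_RC (ltnW n_ge) zz.
  by split=> y; rewrite ?E ?O ?I !(inE, mem_range); lia.
- have [E I O] := inRC_reverse_alternating_blocks s_RC (ltnW n_ge) zz.
  by split=> y; rewrite ?E ?O ?I !(inE, mem_range); lia.
- have [E O I] := inRC_alternating_blocks s_RC n_ge zz.
  by split=> y; rewrite ?E ?O ?I !(inE, mem_range); lia.
- have [E I O] := inRC_reverse_alternating_blocks s_RC n_ge zz.
  by split=> y; rewrite ?E ?O ?I !(inE, mem_range); lia.
Qed.
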